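(* Let $\Gamma>1$ and let $(\rho_L,u_L,p_L)$, $(\rho_R,u_R,p_R)$ be two states with $\rho_L,\rho_R,p_L,p_R>0$ and $|u_L|,|u_R|<1$. Set $W_{L}=1/\sqrt{1-u_{L}^2}$, $W_{R}=1/\sqrt{1-u_{R}^2}$, and $z_1=\rho$, $z_2=\rho/p$, $z_3=u$ (evaluated at the left and right states). Define \[ \tilde F_1=\{\!\{z_1\}\!\}^{\ln}\{\!\{uW\}\!\}, \qquad \alpha = 1+\frac{1}{(\Gamma-1)\{\!\{z_2\}\!\}^{\ln}}, \] \[ Q=\{\!\{z_2\}\!\}\{\!\{W\}\!\}^2+\{\!\{z_2\}\!\}\{\!\{z_3\}\!\}\{\!\{W\}\!\}\,\mathcal L(z_3)-\{\!\{z_2\}\!\}\{\!\{uW\}\!\}\,\mathcal L(z_3), \] \[ \tilde F_2=Q^{-1}\Big[\alpha\{\!\{z_2\}\!\}\mathcal L(z_3)\tilde F_1+\{\!\{z_1\}\!\}\{\!\{W\}\!\}^2+\{\!\{z_1\}\!\}\{\!\{z_3\}\!\}\{\!\{W\}\!\}\mathcal L(z_3)\Big], \] \[ \tilde F_3=Q^{-1}\Big[\{\!\{z_1\}\!\}\{\!\{W\}\!\}\{\!\{uW\}\!\}+\{\!\{z_1\}\!\}\{\!\{z_3\}\!\}\{\!\{uW\}\!\}\mathcal L(z_3)+\alpha\tilde F_1\big(\{\!\{z_2\}\!\}\{\!\{W\}\!\}+\{\!\{z_2\}\!\}\{\!\{z_3\}\!\}\mathcal L(z_3)\big)\Big]. \]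 Then $Q=\{\!\{z_2\}\!\}W_LW_R>0$, so $\tilde{\mathbf F}=(\tilde F_1,\tilde F_2,\tilde F_3)^{T}$ is well defined, and it satisfies the entropy conservation condition \[ [\![\mathbf V]\!]^{T}\tilde{\mathbf F}=[\![\psi]\!]. \] Moreover $\tilde{\mathbf F}$ is consistent: if $(\rho_L,u_L,p_L)=(\rho_R,u_R,p_R)=(\rho,u,p)$, then $\tilde{\mathbf F}=(\rho W u,\ \rho h W^2u^2+p,\ \rho h W^2 u)^T$, which is the one-dimensional special relativistic hydrodynamics flux $\mathbf F(\mathbf U)$ evaluated at that state.
   Context: One-dimensional special relativistic hydrodynamics (units with speed of light $1$) with ideal equation of state $p=(\Gamma-1)\rho e$: conservative variables $\mathbf U=(D,m,E)^T$ with $D=\rho W$, $m=\rho hW^2u$, $E=\rho hW^2-p$, flux $\mathbf F(\mathbf U)=(Du,\,mu+p,\,m)^T$, where $W=1/\sqrt{1-u^2}$ is the Lorentz factor and $h=1+\Gamma p/((\Gamma-1)\rho)$ the specific enthalpy. Thermodynamic entropy $S=\ln p-\Gamma\ln\rho$; entropy variables $\mathbf V=\big(\frac{\Gamma-S}{\Gamma-1}+\frac{\rho}{p},\ \frac{\rho W u}{p},\ -\frac{\rho W}{p}\big)^T$ and potential $\psi=\rho W u$ (these correspond to the entropy pair $\eta=-\rho WS/(\Gamma-1)$, $q=-\rho uWS/(\Gamma-1)$). For a quantity $a$ taking values $a_L,a_R$ at the two states: jump $[\![a]\!]=a_R-a_L$; arithmetic mean $\{\!\{a\}\!\}=(a_L+a_R)/2$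 (so e.g. $\{\!\{uW\}\!\}=(u_LW_L+u_RW_R)/2$); for positive $a$, logarithmic mean $\{\!\{a\}\!\}^{\ln}=[\![a]\!]/[\![\ln a]\!]$ if $a_L\neq a_R$ and $\{\!\{a\}\!\}^{\ln}=a_L$ if $a_L=a_R$. The ''Lorentz mean'' is $\mathcal L(u)=\dfrac{u_L+u_R}{\sqrt{1-u_L^2}\sqrt{1-u_R^2}\big(\sqrt{1-u_L^2}+\sqrt{1-u_R^2}\big)}$, which satisfies $[\![W]\!]=\mathcal L(u)[\![u]\!]$; $\mathcal L(z_3)$ means $\mathcal L(u)$. *)

From Stdlib Require Import Reals Lra.
Open Scope R_scope.

Definition lorW (u : R) : R := 1 / sqrt (1 - u ^ 2).

Definition amean (aL aR : R) : R := (aL + aR) / 2.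

Definition jump (aL aR : R) : R := aR - aL.

Definition lnmean (aL aR : R) : R :=
  if Req_EM_T aL aR then aL else (aR - aL) / (ln aR - ln aL).

Definition lorMean (uL uR : R) : R :=
  (uL + uR) /
  (sqrt (1 - uL ^ 2) * sqrt (1 - uR ^ 2) * (sqrt (1 - uL ^ 2) + sqrt (1 - uR ^ 2))).

Definition enthalpy (G rho p : R) : R := 1 + G * p / ((G - 1) * rho).

Definition entropyS (G rho p : R) : R := ln p - G * ln rho.

Definition V1 (G rho u p : R) : R := (G - entropyS G rho p) / (G - 1) + rho / p.
Definition V2 (G rho u p : R) : R := rho * lorW u * u / p.
Definition V3 (G rho u p : R) : R := - (rho * lorW u / p).

Definition psiPot (rho u : R) : R := rho * lorW u * u.

Definition consD (rho u : R) : R := rho * lorW u.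
Definition consM (G rho u p : R) : R := rho * enthalpy G rho p * (lorW u) ^ 2 * u.
Definition consE (G rho u p : R) : R := rho * enthalpy G rho p * (lorW u) ^ 2 - p.

Definition flux1 (G rho u p : R) : R := consD rho u * u.
Definition flux2 (G rho u p : R) : R := consM G rho u p * u + p.
Definition flux3 (G rho u p : R) : R := consM G rho u p.

Section NumFlux.
Variables (G rhoL uL pL rhoR uR pR : R).

Let z1m := amean rhoL rhoR.
Let z1ln := lnmean rhoL rhoR.
Let z2m := amean (rhoL / pL) (rhoR / pR).
Let z2ln := lnmean (rhoL / pL) (rhoR / pR).
Let z3m := amean uL uR.
Let Wm := amean (lorW uL) (lorW uR).
Let uWm := amean (uL * lorW uL) (uR * lorW uR).
Let Lz3 := lorMean uL uR.

Definition numF1 : R := z1ln * uWm.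
Definition alphaC : R := 1 + 1 / ((G - 1) * z2ln).
Definition Qden : R := z2m * Wm ^ 2 + z2m * z3m * Wm * Lz3 - z2m * uWm * Lz3.
Definition numF2 : R :=
  / Qden * (alphaC * z2m * Lz3 * numF1 + z1m * Wm ^ 2 + z1m * z3m * Wm * Lz3).
Definition numF3 : R :=
  / Qden * (z1m * Wm * uWm + z1m * z3m * uWm * Lz3
            + alphaC * numF1 * (z2m * Wm + z2m * z3m * Lz3)).
End NumFlux.

(** Write [z] for [rho/p], [d] for jumps and bars for arithmetic means.  The
    discrete product rule [d(ab) = a_bar db + da b_bar] and the logarithmic
    mean turn [dV . F] into a combination of [d rho], [d z] and [d u]: the
    jumps of [W] and [uW] are eliminated through the defining property
    [dW = L du] of the Lorentz mean.  The [d rho] terms of both sides agree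
    by the choice of [F1], and [F2], [F3] are exactly Cramer's solution of
    the 2x2 linear system that matches the [d z] and [d u] coefficients; its
    determinant is [Q], which equals [z_bar W_L W_R] because
    [W_bar^2 - (dW)^2/4 = W_L W_R]. *)

From Stdlib Require Import Reals Lra.
Open Scope R_scope.

Lemma amean_diag (a : R) : amean a a = a.
Proof. unfold amean; field. Qed.

Lemma jump_mul (aL aR bL bR : R) :
  jump (aL * bL) (aR * bR) = amean aL aR * jump bL bR + jump aL aR * amean bL bR.
Proof. unfold jump, amean; field. Qed.

Lemma jump_opp (aL aR : R) : jump (- aL) (- aR) = - jump aL aR.
Proof. unfold jump; ring. Qed.

Lemma lnmean_diag (a : R) : lnmean a a = a.
Proof. unfold lnmean; destruct (Req_EM_T a a); [reflexivity | contradiction]. Qed.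

Lemma lnmean_pos (x y : R) : 0 < x -> 0 < y -> 0 < lnmean x y.
Proof.
  intros hx hy; unfold lnmean; destruct (Req_EM_T x y) as [_ | ne]; [exact hx |].
  destruct (Rlt_or_le x y) as [lt | le].
  - assert (ln x < ln y) by (apply ln_increasing; assumption).
    apply Rdiv_lt_0_compat; lra.
  - assert (ln y < ln x) by (apply ln_increasing; [assumption | lra]).
    replace ((y - x) / (ln y - ln x)) with ((x - y) / (ln x - ln y)) by (field; lra).
    apply Rdiv_lt_0_compat; lra.
Qed.

Lemma jump_ln (x y : R) :
  0 < x -> 0 < y -> jump (ln x) (ln y) = jump x y / lnmean x y.
Proof.
  intros hx hy; pose proof (lnmean_pos x y hx hy).
  unfold lnmean, jump in *; destruct (Req_EM_T x y) as [-> | ne].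
  - field; lra.
  - assert (ln y - ln x <> 0) by (intro h; apply ne, ln_inv; [assumption .. | lra]).
    field; split; [assumption | lra].
Qed.

Lemma sqrt_1_sub_sqr_pos (u : R) : Rabs u < 1 -> 0 < sqrt (1 - u ^ 2).
Proof. intros hu; apply Rabs_def2 in hu; apply sqrt_lt_R0; nra. Qed.

Lemma sqrt_1_sub_sqr_sqr (u : R) : Rabs u < 1 -> sqrt (1 - u ^ 2) ^ 2 = 1 - u ^ 2.
Proof. intros hu; apply Rabs_def2 in hu; apply pow2_sqrt; nra. Qed.

Lemma lorW_pos (u : R) : Rabs u < 1 -> 0 < lorW u.
Proof.
  intros hu; unfold lorW.
  apply Rdiv_lt_0_compat; [lra | exact (sqrt_1_sub_sqr_pos u hu)].
Qed.

Lemma lorW_sqr (u : R) : Rabs u < 1 -> lorW u ^ 2 = 1 + (u * lorW u) ^ 2.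
Proof.
  intros hu; pose proof (sqrt_1_sub_sqr_pos u hu) as hs.
  pose proof (sqrt_1_sub_sqr_sqr u hu) as hs2.
  unfold lorW; set (s := sqrt (1 - u ^ 2)) in *.
  replace ((u * (1 / s)) ^ 2) with (u ^ 2 / s ^ 2) by (field; lra).
  replace (u ^ 2) with (1 - s ^ 2) by lra.
  field; lra.
Qed.

Lemma lorMean_jump (uL uR : R) :
  Rabs uL < 1 -> Rabs uR < 1 ->
  lorMean uL uR * jump uL uR = jump (lorW uL) (lorW uR).
Proof.
  intros huL huR.
  pose proof (sqrt_1_sub_sqr_pos uL huL) as ha.
  pose proof (sqrt_1_sub_sqr_pos uR huR) as hb.
  pose proof (sqrt_1_sub_sqr_sqr uL huL) as ha2.
  pose proof (sqrt_1_sub_sqr_sqr uR huR) as hb2.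
  unfold lorMean, lorW, jump.
  set (a := sqrt (1 - uL ^ 2)) in *; set (b := sqrt (1 - uR ^ 2)) in *.
  assert (e : (uL + uR) * (uR - uL) = (a - b) * (a + b)) by nra.
  transitivity ((uL + uR) * (uR - uL) / (a * b * (a + b))); [field; lra |].
  rewrite e; field; lra.
Qed.

Lemma lorMean_diag (u : R) : Rabs u < 1 -> lorMean u u = u * lorW u ^ 3.
Proof.
  intros hu; pose proof (sqrt_1_sub_sqr_pos u hu).
  unfold lorMean, lorW; field; lra.
Qed.

Lemma ln_div (x y : R) : 0 < x -> 0 < y -> ln (x / y) = ln x - ln y.
Proof.
  intros hx hy; unfold Rdiv.
  rewrite ln_mult, ln_Rinv by (try apply Rinv_0_lt_compat; assumption); ring.
Qed.

Lemma V1_eq (G rho u p : R) :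
  G <> 1 -> 0 < rho -> 0 < p ->
  V1 G rho u p = G / (G - 1) + ln rho + ln (rho / p) / (G - 1) + rho / p.
Proof.
  intros hG hr hp; unfold V1, entropyS; rewrite ln_div by assumption.
  field; lra.
Qed.

Lemma jump_V1 (G rhoL uL pL rhoR uR pR : R) :
  G <> 1 -> 0 < rhoL -> 0 < rhoR -> 0 < pL -> 0 < pR ->
  jump (V1 G rhoL uL pL) (V1 G rhoR uR pR)
  = jump (ln rhoL) (ln rhoR) + jump (ln (rhoL / pL)) (ln (rhoR / pR)) / (G - 1)
    + jump (rhoL / pL) (rhoR / pR).
Proof.
  intros hG hrL hrR hpL hpR; rewrite !V1_eq by assumption.
  unfold jump; field; lra.
Qed.

Lemma V2_eq (G rho u p : R) : V2 G rho u p = rho / p * (u * lorW u).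
Proof. unfold V2, Rdiv; ring. Qed.

Lemma V3_eq (G rho u p : R) : V3 G rho u p = - (rho / p * lorW u).
Proof. unfold V3, Rdiv; ring. Qed.

Lemma psiPot_eq (rho u : R) : psiPot rho u = rho * (u * lorW u).
Proof. unfold psiPot; ring. Qed.

Section TwoStates.

Variables (G rhoL uL pL rhoR uR pR : R).
Hypotheses (hG : 1 < G) (hrL : 0 < rhoL) (hrR : 0 < rhoR) (hpL : 0 < pL) (hpR : 0 < pR)
  (huL : Rabs uL < 1) (huR : Rabs uR < 1).

Local Notation z1m := (amean rhoL rhoR).
Local Notation z2m := (amean (rhoL / pL) (rhoR / pR)).
Local Notation z3m := (amean uL uR).
Local Notation Wm := (amean (lorW uL) (lorW uR)).
Local Notation uWm := (amean (uL * lorW uL) (uR * lorW uR)).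
Local Notation L := (lorMean uL uR).
Local Notation Q := (Qden rhoL uL pL rhoR uR pR).
Local Notation alpha := (alphaC G rhoL pL rhoR pR).
Local Notation F1 := (numF1 rhoL uL rhoR uR).
Local Notation F2 := (numF2 G rhoL uL pL rhoR uR pR).
Local Notation F3 := (numF3 G rhoL uL pL rhoR uR pR).

Lemma Qden_eq : Q = z2m * lorW uL * lorW uR.
Proof.
  transitivity (z2m * lorW uL * lorW uR + z2m * jump (lorW uL) (lorW uR)
                * (jump (lorW uL) (lorW uR) - L * jump uL uR) / 4).
  - unfold Qden, amean, jump; field; split; lra.
  - rewrite lorMean_jump by assumption; field.
Qed.

Lemma Qden_pos : 0 < Q.
Proof.
  assert (0 < rhoL / pL) by (apply Rdiv_lt_0_compat; assumption).
  assert (0 < rhoR / pR) by (apply Rdiv_lt_0_compat; assumption).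
  pose proof (lorW_pos uL huL); pose proof (lorW_pos uR huR).
  rewrite Qden_eq.
  apply Rmult_lt_0_compat; [apply Rmult_lt_0_compat |]; try assumption.
  unfold amean; lra.
Qed.

Lemma numF23_z2_coeff : Q <> 0 -> alpha * F1 + uWm * F2 - Wm * F3 = 0.
Proof.
  intros hQ; unfold numF2, numF3; unfold Qden in *.
  field; exact hQ.
Qed.

Lemma numF23_u_coeff : Q <> 0 -> z2m * (Wm + z3m * L) * F2 - z2m * L * F3 = z1m * (Wm + z3m * L).
Proof.
  intros hQ; unfold numF2, numF3; unfold Qden in *.
  field; exact hQ.
Qed.

Lemma jump_V1_mul_numF1 :
  jump (V1 G rhoL uL pL) (V1 G rhoR uR pR) * F1
  = jump rhoL rhoR * uWm + alpha * jump (rhoL / pL) (rhoR / pR) * F1.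
Proof.
  assert (hzL : 0 < rhoL / pL) by (apply Rdiv_lt_0_compat; assumption).
  assert (hzR : 0 < rhoR / pR) by (apply Rdiv_lt_0_compat; assumption).
  pose proof (lnmean_pos rhoL rhoR hrL hrR).
  pose proof (lnmean_pos _ _ hzL hzR).
  rewrite jump_V1, !jump_ln by lra.
  unfold numF1, alphaC; field; lra.
Qed.

Lemma jump_uW : jump (uL * lorW uL) (uR * lorW uR) = (Wm + z3m * L) * jump uL uR.
Proof. rewrite jump_mul, <- lorMean_jump by assumption; ring. Qed.

Lemma numF_entropy_conservative :
  jump (V1 G rhoL uL pL) (V1 G rhoR uR pR) * F1
  + jump (V2 G rhoL uL pL) (V2 G rhoR uR pR) * F2
  + jump (V3 G rhoL uL pL) (V3 G rhoR uR pR) * F3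
  = jump (psiPot rhoL uL) (psiPot rhoR uR).
Proof.
  rewrite jump_V1_mul_numF1, !V2_eq, !V3_eq, !psiPot_eq, jump_opp.
  rewrite (jump_mul (rhoL / pL)), (jump_mul (rhoL / pL)), (jump_mul rhoL), jump_uW.
  rewrite <- lorMean_jump by assumption.
  transitivity (jump rhoL rhoR * uWm
    + jump (rhoL / pL) (rhoR / pR) * (alpha * F1 + uWm * F2 - Wm * F3)
    + jump uL uR * (z2m * (Wm + z3m * L) * F2 - z2m * L * F3)); [ring |].
  rewrite numF23_z2_coeff, numF23_u_coeff by (apply Rgt_not_eq, Qden_pos).
  ring.
Qed.

End TwoStates.

Lemma numF1_diag (rho u : R) : numF1 rho u rho u = rho * lorW u * u.
Proof. unfold numF1; rewrite lnmean_diag, amean_diag; ring. Qed.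

Lemma numF2_diag (G rho u p : R) :
  1 < G -> 0 < rho -> 0 < p -> Rabs u < 1 ->
  numF2 G rho u p rho u p = rho * enthalpy G rho p * lorW u ^ 2 * u ^ 2 + p.
Proof.
  intros hG hr hp hu; pose proof (lorW_pos u hu).
  unfold numF2, alphaC.
  rewrite Qden_eq, numF1_diag, lorMean_diag, lnmean_diag, !amean_diag by assumption.
  unfold enthalpy; field; lra.
Qed.

Lemma numF3_diag (G rho u p : R) :
  1 < G -> 0 < rho -> 0 < p -> Rabs u < 1 ->
  numF3 G rho u p rho u p = rho * enthalpy G rho p * lorW u ^ 2 * u.
Proof.
  intros hG hr hp hu; pose proof (lorW_pos u hu).
  rewrite lorW_sqr by assumption; unfold numF3, alphaC.
  rewrite Qden_eq, numF1_diag, lorMean_diag, lnmean_diag, !amean_diag by assumption.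
  unfold enthalpy; field; lra.
Qed.

Theorem mainTheorem1 (G rhoL uL pL rhoR uR pR : R) :
  1 < G ->
  0 < rhoL -> 0 < rhoR -> 0 < pL -> 0 < pR ->
  Rabs uL < 1 -> Rabs uR < 1 ->
  (* Q = {{z2}} W_L W_R > 0 *)
  Qden rhoL uL pL rhoR uR pR = amean (rhoL / pL) (rhoR / pR) * lorW uL * lorW uR /\
  0 < Qden rhoL uL pL rhoR uR pR /\
  (* entropy conservation [[V]]^T F~ = [[psi]] *)
  jump (V1 G rhoL uL pL) (V1 G rhoR uR pR) * numF1 rhoL uL rhoR uR
  + jump (V2 G rhoL uL pL) (V2 G rhoR uR pR) * numF2 G rhoL uL pL rhoR uR pR
  + jump (V3 G rhoL uL pL) (V3 G rhoR uR pR) * numF3 G rhoL uL pL rhoR uR pR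
  = jump (psiPot rhoL uL) (psiPot rhoR uR) /\
  (* consistency *)
  ((rhoL = rhoR /\ uL = uR /\ pL = pR) ->
     numF1 rhoL uL rhoR uR = flux1 G rhoL uL pL /\
     numF2 G rhoL uL pL rhoR uR pR = flux2 G rhoL uL pL /\
     numF3 G rhoL uL pL rhoR uR pR = flux3 G rhoL uL pL /\
     flux1 G rhoL uL pL = rhoL * lorW uL * uL /\
     flux2 G rhoL uL pL = rhoL * enthalpy G rhoL pL * lorW uL ^ 2 * uL ^ 2 + pL /\
     flux3 G rhoL uL pL = rhoL * enthalpy G rhoL pL * lorW uL ^ 2 * uL).
Proof.
  intros hG hrL hrR hpL hpR huL huR.
  split; [apply Qden_eq; assumption |].
  split; [apply Qden_pos; assumption |].
  split; [apply numF_entropy_conservative; assumption |].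
  intros [<- [<- <-]].
  rewrite numF1_diag, numF2_diag, numF3_diag by assumption.
  unfold flux1, flux2, flux3, consD, consM.
  repeat split; ring.
Qed.
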